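(* Let $\mathcal M$ be the set of all episodic MDPs with rewards bounded in $[-R_{\max},R_{\max}]$ satisfying $\sum_{t=0}^\infty\Pr(S_t\neq s_\infty)<\infty$ for every policy $\pi$. Then for every $\gamma<1$ there is no objective $J_?$ (assigning to each MDP $M\in\mathcal M$ and differentiable parameterized policy $\pi^\theta$ a real-valued function of $\theta$) such that for all $M\in\mathcal M$, $$\nabla J_?(\theta)=\mathbb E\left[\sum_{t=0}^{\infty}\psi^\theta(S_t,A_t)\,Q^\theta_\gamma(S_t,A_t)\,\middle|\,\theta\right].$$
   Context: An MDP is a tuple $(\mathcal S,\mathcal A,P,R,d_0,\gamma)$ with discrete state set $\mathcal S$, discrete action set $\mathcal A$, transition function $P:\mathcal S\times\mathcal A\times\mathcal S\to[0,1]$, expected reward function $R:\mathcal S\times\mathcal A\to[-R_{\max},R_{\max}]$, initial state distribution $d_0$, and discount factor $\gamma\in[0,1]$. At each time $t=0,1,2,\dots$ the agent observes $S_t$ (with $S_0\sim d_0$), takes $A_t\sim\pi^\theta(S_t,\cdot)$, transitions to $S_{t+1}\sim P(S_t,A_t,\cdot)$, and receives reward $R_t$ with expectation $R(S_t,A_t)$. Episodic: there is a terminal absorbing state $s_\infty$ which, once entered, is never left and yields reward $0$ forever. A parameterized policy $\pi^\theta:\mathcal S\times\mathcal A\to[0,1]$ gives action probabilities as a function of a parameter vector $\theta$; conditioning on $\theta$ means actions are drawn from $\pi^\theta$. Compatible features: $\psi^\theta(s,a):=\frac{\partial}{\partial\theta}\ln\pi^\theta(s,a)$. Action-value function: $Q^\theta_\gamma(s,a):=\mathbb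 E[\sum_{k=0}^\infty\gamma^kR_{t+k}\mid S_t=s,A_t=a,\theta]$. Here $\nabla$ denotes the gradient with respect to $\theta$. *)

From HB Require Import structures.
From mathcomp Require Import all_boot all_order all_algebra.
From mathcomp Require Import all_classical all_reals all_analysis.
Set Implicit Arguments. Unset Strict Implicit. Unset Printing Implicit Defensive.
Import Order.TTheory GRing.Theory Num.Theory.
Import numFieldNormedType.Exports.
Local Open Scope ring_scope.

Section MDP.
Variable R : realType.
Variables S A : finType.

Record mdp := MDP {
  trans : S -> A -> S -> R;
  rew   : S -> A -> R;        (* expected reward R(s,a) *)
  init  : S -> R;
  sinf  : S
}.

Definition is_distr (mu : S -> R) := (forall s, 0 <= mu s) /\ \sum_s mu s = 1.

Definition policy := S -> A -> R.
Definition is_policy (pi : policy) :=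
  forall s, (forall a, 0 <= pi s a) /\ \sum_a pi s a = 1.

(* sdist M pi mu t s = Pr(S_t = s) when S_0 ~ mu and actions drawn from pi *)
Fixpoint sdist (M : mdp) (pi : policy) (mu : S -> R) (t : nat) : S -> R :=
  match t with
  | 0 => mu
  | t'.+1 => fun s' => \sum_s \sum_a sdist M pi mu t' s * pi s a * trans M s a s'
  end.

Definition prob_nonterm (M : mdp) (pi : policy) (t : nat) : R :=
  \sum_(s | s != sinf M) sdist M pi (init M) t s.

Definition in_class (Rmax : R) (M : mdp) : Prop :=
  (forall s a, is_distr (trans M s a)) /\
      is_distr (init M) /\
      (forall a, trans M (sinf M) a (sinf M) = 1) /\
      (forall a, rew M (sinf M) a = 0) /\
      (forall s a, - Rmax <= rew M s a <= Rmax) /\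
      (forall pi, is_policy pi -> cvgn (series (prob_nonterm M pi))).

Definition exp_rew (M : mdp) (pi : policy) (s : S) : R :=
  \sum_a pi s a * rew M s a.

(* Q^pi_gamma(s,a) = sum_k gamma^k E[R_{t+k} | S_t = s, A_t = a] *)
Definition Qval (gamma : R) (M : mdp) (pi : policy) (s : S) (a : A) : R :=
  rew M s a +
  limn (series (fun k : nat => gamma ^+ k.+1 *
      \sum_s' sdist M pi (trans M s a) k s' * exp_rew M pi s')).

Definition ppolicy (n : nat) := 'rV[R]_n -> S -> A -> R.

Definition is_diff_ppolicy (n : nat) (pt : ppolicy n) : Prop :=
  forall th, is_policy (pt th) /\
    forall s a, differentiable (fun th' : 'rV[R]_n => pt th' s a) th.

(* psi^theta(s,a) . v, with psi = d/dtheta ln pi^theta(s,a) *)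
Definition psi_dir (n : nat) (pt : ppolicy n) (th : 'rV[R]_n) (s : S) (a : A)
  (v : 'rV[R]_n) : R :=
  'd (fun th' : 'rV[R]_n => ln (pt th' s a)) th v.

Definition update_dir (gamma : R) (M : mdp) (n : nat) (pt : ppolicy n)
  (th v : 'rV[R]_n) : R :=
  limn (series (fun t : nat =>
     \sum_s \sum_a (sdist M (pt th) (init M) t s * pt th s a *
                    psi_dir pt th s a v * Qval gamma M (pt th) s a))).

End MDP.

From HB Require Import structures.
From mathcomp Require Import all_boot all_order all_algebra.
From mathcomp Require Import all_classical all_reals all_analysis.
From mathcomp Require Import lra ring.
Set Implicit Arguments. Unset Strict Implicit. Unset Printing Implicit Defensive.
Import Order.TTheory GRing.Theory Num.Theory.
Import numFieldNormedType.Exports.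
Local Open Scope classical_set_scope.
Local Open Scope ring_scope.

(* The update direction weights every visit to a state equally, whereas Q is
   discounted.  In the MDP [detour_mdp] the two actions of the start state
   reach the rewarding state 1 either at once with probability gamma, or
   surely after a detour; both have discounted value gamma^2 times the
   expected reward in state 1.  Hence the update has no component along the
   first parameter, so a J with this gradient would be constant along it, and
   the component of its gradient along the second parameter would not depend
   on the first.  But that component is proportional to the undiscounted
   probability of visiting state 1, which does depend on the first parameter
   when gamma < 1. *)

Section Analysis.
Variable R : realType.

Lemma cvg_series_eventually0 (V : normedModType R) (u : V ^nat) N :
  (forall k, (N <= k)%N -> u k = 0) -> series u @ \oo --> series u N.
Proof.
move=> u0; apply: cvg_near_cst; exists N => // n /= Nn.
apply/eqP; rewrite -subr_eq0 sub_series_geq // big_nat_cond big1 //.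
by move=> k /andP[/andP[Nk _] _]; exact: u0.
Qed.

Lemma lim_series_eventually0 (V : normedModType R) (u : V ^nat) N :
  (forall k, (N <= k)%N -> u k = 0) -> limn (series u) = series u N.
Proof. by move=> u0; apply: cvg_lim => //; exact: cvg_series_eventually0. Qed.

Lemma is_derive_line (V : normedModType R) (f : V -> R) (a v : V) (t : R) :
  differentiable f (a + t *: v) ->
  is_derive t 1 (fun s => f (a + s *: v)) ('d f (a + t *: v) v).
Proof.
move=> df.
have quotE : (fun h : R => h^-1 *: (((fun s => f (a + s *: v)) \o shift t) (h *: 1)
                                    - f (a + t *: v)))
           = (fun h : R => h^-1 *: ((f \o shift (a + t *: v)) (h *: v) - f (a + t *: v))).
  apply/funext => h /=; congr (_ *: (f _ - _)).
  by rewrite [h%:A]mulr1 scalerDl addrCA.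
have dv : derivable f (a + t *: v) v by exact: diff_derivable.
apply: DeriveDef; first by rewrite /derivable quotE.
by rewrite -deriveE // /derive quotE.
Qed.

Section ZeroDirectionalDerivative.
Variables (V : normedModType R) (f : V -> R) (e : V).
Hypotheses (f_diff : forall x, differentiable f x) (df_e : forall x, 'd f x e = 0).

Lemma diff_dir0_cst x t : f (x + t *: e) = f x.
Proof.
have := @is_derive_0_is_cst _ (fun s => f (x + s *: e)) t 0.
rewrite scale0r addr0; apply => s.
by apply: is_derive_eq; [exact: is_derive_line | exact: df_e].
Qed.

Lemma diff_dir0_shift x t v : 'd f (x + t *: e) v = 'd f x v.
Proof.
rewrite -!deriveE // /derive.
suff -> : (fun h : R => h^-1 *: ((f \o shift (x + t *: e)) (h *: v) - f (x + t *: e)))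
        = (fun h : R => h^-1 *: ((f \o shift x) (h *: v) - f x)) by [].
by apply/funext => h /=; rewrite addrA !diff_dir0_cst.
Qed.

End ZeroDirectionalDerivative.

Lemma diff_coord m n (M v : 'M[R]_(m, n)) i j :
  'd (fun N : 'M[R]_(m, n) => N i j) M v = v i j.
Proof.
have @c : {linear 'M[R]_(m, n) -> R}.
  by exists (fun N : 'M[R]_(_, _) => N i j); do 2![eexists]; do ?[constructor];
     rewrite ?mxE// => ? *; rewrite ?mxE//; move=> ?; rewrite !mxE.
by rewrite (_ : (fun _ => _) = c) // diff_lin //; exact: coord_continuous.
Qed.

Lemma differentiable_comp_coord m n (M : 'M[R]_(m, n)) i j (f : R -> R) :
  derivable f (M i j) 1 -> differentiable (fun N : 'M[R]_(m, n) => f (N i j)) M.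
Proof.
by move=> /derivable1_diffP df; exact: (differentiable_comp (differentiable_coord M i j) df).
Qed.

Lemma diff_ln_coord n (j : 'I_n) (f : R -> R) (df : R) (th v : 'rV[R]_n) :
  0 < f (th ord0 j) -> is_derive (th ord0 j) 1 f df ->
  'd (fun th' : 'rV[R]_n => ln (f (th' ord0 j))) th v = v ord0 j * df / f (th ord0 j).
Proof.
move=> f_gt0 f_der.
have lnf_der : is_derive (th ord0 j) 1 (@ln R \o f) ((f (th ord0 j))^-1 * df).
  by apply: is_derive1_comp; exact: is_derive1_ln.
rewrite (_ : (fun _ => _) = (@ln R \o f) \o (fun th' : 'rV[R]_n => th' ord0 j)) //.
rewrite diff_comp; [|exact: differentiable_coord|by apply/derivable1_diffP; case: lnf_der].
rewrite /= diff_coord deriv1E; last by case: lnf_der.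
by rewrite derive1E derive_val /GRing.scale /= mulrCA mulrC.
Qed.

Definition sin_prob (b : bool) (x : R) : R :=
  if b then (2 + sin x) / 4 else (2 - sin x) / 4.

Definition sin_prob' (b : bool) (x : R) : R :=
  if b then cos x / 4 else - cos x / 4.

Lemma sin_prob_gt0 (b : bool) (x : R) : 0 < sin_prob b x.
Proof. by have := sin_le1 x; have := sin_geN1 x; case: b => /=; lra. Qed.

Lemma is_derive_sin_prob (b : bool) (x : R) : is_derive x 1 (sin_prob b) (sin_prob' b x).
Proof.
case: b.
  rewrite (_ : sin_prob true = 4^-1 \*: (cst 2 + @sin R)); last first.
    by apply/funext => y; rewrite /sin_prob /= mulrC.
  by apply: is_derive_eq; rewrite /sin_prob' add0r /GRing.scale /= mulrC.
rewrite (_ : sin_prob false = 4^-1 \*: (cst 2 - @sin R)); last first.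
  by apply/funext => y; rewrite /sin_prob /= mulrC.
by apply: is_derive_eq; rewrite /sin_prob' sub0r /GRing.scale /= mulrC mulNr.
Qed.

End Analysis.

Local Notation s0 := (@Ordinal 4 0 isT).
Local Notation s1 := (@Ordinal 4 1 isT).
Local Notation s2 := (@Ordinal 4 2 isT).
Local Notation s3 := (@Ordinal 4 3 isT).
Local Notation i1 := (@Ordinal 2 1 isT).

Lemma sum_ord4 (R : nmodType) (F : 'I_4 -> R) :
  \sum_(s : 'I_4) F s = F s0 + F s1 + F s2 + F s3.
Proof.
rewrite !big_ord_recl big_ord0 addr0 !addrA.
by congr (_ + _ + _ + _); congr F; apply: val_inj.
Qed.

Section Detour.
Variables (R : realType) (gamma Rmax : R).

(* Start in state 0; state 3 is terminal and the reward [Rmax] is earned by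
   action [true] in state 1.  From state 0, action [false] reaches state 1 with
   probability [gamma] (and terminates otherwise), while action [true] reaches
   it surely, one step later, through state 2. *)
Definition detour_trans (s : 'I_4) (a : bool) (s' : 'I_4) : R :=
  match nat_of_ord s with
  | 0 => if a then (if nat_of_ord s' == 2%N then 1 else 0)
         else (if nat_of_ord s' == 1%N then gamma
               else if nat_of_ord s' == 3%N then 1 - gamma else 0)
  | 2 => if nat_of_ord s' == 1%N then 1 else 0
  | _ => if nat_of_ord s' == 3%N then 1 else 0
  end.

Definition detour_rew (s : 'I_4) (a : bool) : R :=
  if (nat_of_ord s == 1%N) && a then Rmax else 0.

Definition detour_init (s : 'I_4) : R := if nat_of_ord s == 0%N then 1 else 0.

Definition detour_mdp : mdp R 'I_4 bool := MDP detour_trans detour_rew detour_init s3.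

Definition detour_policy : ppolicy R 'I_4 bool 2 := fun th s a =>
  match nat_of_ord s with
  | 0 => sin_prob a (th ord0 ord0)
  | 1 => sin_prob a (th ord0 i1)
  | _ => 1 / 2
  end.

Section StateDistribution.
Variables (pi : policy R 'I_4 bool) (mu : 'I_4 -> R).
Local Notation d := (sdist detour_mdp pi mu).

Lemma sdistS0 t : d t.+1 s0 = 0.
Proof. by rewrite /= sum_ord4 !big_bool /= /detour_trans /=; ring. Qed.

Lemma sdistS2 t : d t.+1 s2 = d t s0 * pi s0 true.
Proof. by rewrite /= sum_ord4 !big_bool /= /detour_trans /=; ring. Qed.

Lemma sdistS1 t :
  d t.+1 s1 = d t s0 * pi s0 false * gamma + d t s2 * (pi s2 true + pi s2 false).
Proof. by rewrite /= sum_ord4 !big_bool /= /detour_trans /=; ring. Qed.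

Lemma sdist_late t s : s != s3 -> d t.+3 s = 0.
Proof.
case: s => [[|[|[|[|m]]]] lt_s4] // _; rewrite (bool_irrelevance lt_s4 isT).
- exact: sdistS0.
- by rewrite sdistS1 sdistS0 sdistS2 sdistS0; ring.
- by rewrite sdistS2 sdistS0 mul0r.
Qed.

End StateDistribution.

Lemma detour_in_class : 0 < Rmax -> 0 <= gamma < 1 -> in_class Rmax detour_mdp.
Proof.
move=> Rmax_gt0 /andP[gamma_ge0 gamma_lt1].
split; [|split; [|split; [|split; [|split]]]].
- move=> s a; split.
    move=> s'; case: s => [[|[|[|[|m]]]] ?] //=; case: s' => [[|[|[|[|m']]]] ?] //=;
      rewrite /detour_trans /=; case: a => //=; lra.
  rewrite sum_ord4; case: s => [[|[|[|[|m]]]] ?] //=;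
    rewrite /detour_trans /=; case: a => //=; lra.
- split; first by case=> [[|[|[|[|m]]]] ?] //=; rewrite /detour_init /=; lra.
  by rewrite sum_ord4 /= /detour_init /=; lra.
- by [].
- by [].
- move=> s a; case: s => [[|[|[|[|m]]]] ?] //=; rewrite /detour_rew /=; case: a => /=; lra.
- move=> pi _; apply/cvg_ex; exists (series (prob_nonterm detour_mdp pi) 3).
  apply: cvg_series_eventually0 => k /subnK <-; rewrite addn3.
  by rewrite /prob_nonterm big1 // => s; exact: sdist_late.
Qed.

Definition rew_s1 (th : 'rV[R]_2) : R := detour_policy th s1 true * Rmax.

Lemma sum_sdist_exp_rew mu k th :
  \sum_s sdist detour_mdp (detour_policy th) mu k s * exp_rew detour_mdp (detour_policy th) s
  = sdist detour_mdp (detour_policy th) mu k s1 * rew_s1 th.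
Proof. by rewrite sum_ord4 /exp_rew /rew_s1 !big_bool /= /detour_rew /=; ring. Qed.

Lemma detour_trans_s0 s a : detour_trans s a s0 = 0.
Proof. by case: s => [[|[|[|[|m]]]] ?] //; rewrite /detour_trans /=; case: a. Qed.

Lemma Qval_detour th s a :
  Qval gamma detour_mdp (detour_policy th) s a
  = detour_rew s a + (gamma * detour_trans s a s1 + gamma ^+ 2 * detour_trans s a s2) * rew_s1 th.
Proof.
rewrite /Qval (@lim_series_eventually0 _ _ _ 3%N); last first.
  by move=> k /subnK <-; rewrite addn3 sum_sdist_exp_rew sdist_late // mul0r mulr0.
rewrite /series /= !big_nat_recl // big_geq // !sum_sdist_exp_rew.
rewrite !sdistS1 sdistS0 sdistS2 /= !detour_trans_s0 /detour_policy /=.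
by field.
Qed.

Lemma detour_policy_psi th s a v :
  detour_policy th s a * psi_dir detour_policy th s a v =
  if nat_of_ord s == 0%N then v ord0 ord0 * sin_prob' a (th ord0 ord0)
  else if nat_of_ord s == 1%N then v ord0 i1 * sin_prob' a (th ord0 i1) else 0.
Proof.
have ln_sin_prob j : sin_prob a (th ord0 j) *
    'd (fun th' : 'rV_2 => ln (sin_prob a (th' ord0 j))) th v = v ord0 j * sin_prob' a (th ord0 j).
  rewrite (diff_ln_coord v (sin_prob_gt0 a _) (is_derive_sin_prob a _)).
  by have := sin_prob_gt0 a (th ord0 j); move=> ?; field; lra.
rewrite /psi_dir /detour_policy; case: s => [[|[|[|[|m]]]] ?] //=;
  by rewrite diff_cst mulr0.
Qed.

(* At state 0 both actions have the same discounted value [gamma^2 * rew_s1],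
   so the score terms there cancel and only state 1 contributes. *)
Lemma detour_update_term th v mu t :
  \sum_s \sum_a (sdist detour_mdp (detour_policy th) mu t s * detour_policy th s a *
                 psi_dir detour_policy th s a v * Qval gamma detour_mdp (detour_policy th) s a)
  = sdist detour_mdp (detour_policy th) mu t s1 * (v ord0 i1 * (cos (th ord0 i1) / 4) * Rmax).
Proof.
under eq_bigr => s _ do under eq_bigr => a _ do
  rewrite -(mulrA (sdist _ _ _ _ _)) detour_policy_psi Qval_detour.
by rewrite sum_ord4 !big_bool /= /detour_rew /detour_trans /sin_prob' /=; field.
Qed.

(* The first factor is the undiscounted probability of ever visiting state 1. *)
Lemma update_dir_detour th v :
  update_dir gamma detour_mdp detour_policy th v =
  (gamma * sin_prob false (th ord0 ord0) + sin_prob true (th ord0 ord0)) *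
  (v ord0 i1 * (cos (th ord0 i1) / 4) * Rmax).
Proof.
rewrite /update_dir; under eq_fun do rewrite detour_update_term.
rewrite (@lim_series_eventually0 _ _ _ 3%N); last first.
  by move=> k /subnK <-; rewrite addn3 sdist_late // mul0r.
rewrite /series /= !big_nat_recl // big_geq // !sdistS1 sdistS0 sdistS2 /=.
by rewrite /detour_init /detour_policy /=; field.
Qed.

Lemma update_dir_detour_e2_varies : 0 < Rmax -> gamma < 1 ->
  update_dir gamma detour_mdp detour_policy (0 + (pi / 2) *: delta_mx ord0 ord0) (delta_mx ord0 i1)
  != update_dir gamma detour_mdp detour_policy 0 (delta_mx ord0 i1).
Proof.
move=> Rmax_gt0 gamma_lt1; rewrite !update_dir_detour !mxE !eqxx /=.
rewrite mulr1 mulr0 !add0r sin_pihalf sin0 cos0.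
by apply/negP => /eqP; nra.
Qed.

Lemma detour_policy_diff : is_diff_ppolicy detour_policy.
Proof.
move=> th; split; last first.
  move=> s a; have sin_prob_derivable x : derivable (sin_prob a) x 1.
    by case: (is_derive_sin_prob a x).
  case: s => [[|[|[|[|m]]]] ?] //; rewrite /detour_policy /=;
    by [exact: differentiable_cst | exact: differentiable_comp_coord].
case=> [[|[|[|[|m]]]] ?] //; rewrite /detour_policy /=; split;
  rewrite ?big_bool /= /sin_prob; try (move=> a; first [exact/ltW/sin_prob_gt0 | lra]);
  field; done.
Qed.

End Detour.

Theorem theorem4p2 (R : realType) (Rmax gamma : R) :
  0 < Rmax -> 0 <= gamma < 1 ->
  ~ exists J : forall (S A : finType) (n : nat),
                 mdp R S A -> ppolicy R S A n -> 'rV[R]_n -> R,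
      forall (S A : finType) (M : mdp R S A), in_class Rmax M ->
      forall (n : nat) (pt : ppolicy R S A n), is_diff_ppolicy pt ->
      forall th : 'rV[R]_n,
        differentiable (J S A n M pt) th /\
        forall v : 'rV[R]_n, 'd (J S A n M pt) th v = update_dir gamma M pt th v.
Proof.
move=> Rmax_gt0 gamma01 [J J_spec].
have [_ gamma_lt1] := andP gamma01.
have J_detour := J_spec _ _ _ (detour_in_class Rmax_gt0 gamma01) _ _ (@detour_policy_diff R).
pose f := J _ _ 2%N (detour_mdp gamma Rmax) (@detour_policy R).
have f_diff th : differentiable f th := (J_detour th).1.
have df th v : 'd f th v = update_dir gamma (detour_mdp gamma Rmax) (@detour_policy R) th v.
  exact: (J_detour th).2.
have df_e1 th : 'd f th (delta_mx ord0 ord0) = 0.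
  by rewrite df update_dir_detour mxE -[i1 == ord0]/false andbF !mul0r mulr0.
apply/(elimN eqP (update_dir_detour_e2_varies Rmax_gt0 gamma_lt1)).
have shift_e2 := @diff_dir0_shift R _ f _ f_diff df_e1 0 (pi / 2) (delta_mx ord0 i1).
exact: etrans (esym (df _ _)) (etrans shift_e2 (df _ _)).
Qed.
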